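(* Let $\mathcal H$ be a cycle-reset SHS and let $L^{\mathsf{SR}}=\{(\ell,\ell')\in L^2:$ there is at least one edge from $\ell$ to $\ell'$ and every edge $(\ell,a,\ell')\in E$ is strongly reset$\}$. Then for every initial distribution $\nu$ on $S_{\mathcal H}$, $$\mathbb P^{\mathcal T_{\mathcal H}}_\nu\Big(\bigvee_{(\ell,\ell')\in L^{\mathsf{SR}}}\mathbf{GF}(\ell\wedge\mathbf X\ell')\Big)=1,$$ where $\mathbf{GF}(\ell\wedge\mathbf X\ell')$ is the set of runs $s_0s_1\ldots$ such that for infinitely many $k$, $s_k\in\{\ell\}\times\mathbb R^n$ and $s_{k+1}\in\{\ell'\}\times\mathbb R^n$.
   Context: Stochastic hybrid system (SHS) with $n$ variables: finite set $L$ of locations; finite set $E$ of edges $e=(\ell,a,\ell')$; invariants, flows $\gamma_\ell$, guards $\mathcal G(e)$ and reset maps $\mathcal R_e$; states $S_{\mathcal H}=L\times\mathbb R^n$. Probabilistic data: delay distributions $\mu_s$ on $\mathbb R^+$, edge distributions $w_{s'}$ over enabled edges, reset distributions $\eta_e(\mathbf v)$ on $\mathbb R^n$. The STS $\mathcal T_{\mathcal H}$ has kernel $\kappa((\ell,\mathbf v),\{\ell'\}\times D)=\int\sum_{e=(\ell,a,\ell')}w_{s+\tau}(e)\,\eta_e(\gamma_\ell(\mathbf v,\tau))(D)\,d\mu_s(\tau)$ where $s=(\ell,\mathbf v)$, $s+\tau=(\ell,\gamma_\ell(\mathbf v,\tau))$; in particular each step of a run follows an edge of $E$. An edge $e$ is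 strongly reset if $\eta_e(\mathbf v)$ is independent of $\mathbf v$. $\mathcal H$ is cycle-reset if every cycle of the directed graph on $L$ with an arc $\ell\to\ell'$ whenever some edge from $\ell$ to $\ell'$ exists contains an arc $\ell\to\ell'$ such that all edges from $\ell$ to $\ell'$ are strongly reset. $\mathbb P^{\mathcal T_{\mathcal H}}_\nu$ is the induced probability measure on runs. *)

From HB Require Import structures.
From mathcomp Require Import all_boot all_order all_algebra.
From mathcomp Require Import all_classical all_reals all_analysis.
Set Implicit Arguments. Unset Strict Implicit. Unset Printing Implicit Defensive.
Import Order.TTheory GRing.Theory Num.Theory.
Local Open Scope classical_set_scope.
Local Open Scope ring_scope.

(* nonempty (needed because measurable types are pointed in the lib).   *)
Definition stateT (R : realType) (n : nat) (L : finType) (l0 : L) : Type :=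
  (L * n.-tuple R)%type.

HB.instance Definition _ (R : realType) n (L : finType) (l0 : L) :=
  Choice.on (stateT R n l0).
HB.instance Definition _ (R : realType) n (L : finType) (l0 : L) :=
  isPointed.Build (stateT R n l0) ((l0, [tuple of nseq n (0:R)]) : L * n.-tuple R).

(* a set of states is measurable iff each location slice is Borel in R^n
   (product of the discrete sigma-algebra on L with the Borel one on R^n) *)
Definition state_measurable (R : realType) n (L : finType) (l0 : L)
  (B : set (stateT R n l0)) : Prop :=
  forall l : L, measurable [set v : n.-tuple R | B (l, v)].

Section state_measurable_props.
Context (R : realType) (n : nat) (L : finType) (l0 : L).
Lemma state_measurable0 : state_measurable (@set0 (stateT R n l0)).
Proof. by move=> l; rewrite (_ : [set v | _] = set0) //; exact: measurable0. Qed.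
Lemma state_measurableC (B : set (stateT R n l0)) :
  state_measurable B -> state_measurable (~` B).
Proof.
move=> mB l; rewrite (_ : [set v | _] = ~` [set v | B (l, v)]) //.
exact: measurableC.
Qed.
Lemma state_measurable_bigcup (F : (set (stateT R n l0))^nat) :
  (forall i, state_measurable (F i)) -> state_measurable (\bigcup_i F i).
Proof.
move=> mF l; rewrite (_ : [set v | _] = \bigcup_i [set v | F i (l, v)]) //.
by apply: bigcupT_measurable => i; exact: (mF i l).
Qed.
End state_measurable_props.

Fact state_display : measure_display. Proof. exact: default_measure_display. Qed.

HB.instance Definition _ (R : realType) n (L : finType) (l0 : L) :=
  @isMeasurable.Build state_display (stateT R n l0) (@state_measurable R n L l0)
    (@state_measurable0 R n L l0) (@state_measurableC R n L l0)
    (@state_measurable_bigcup R n L l0).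

Definition coord_cylinders (R : realType) n (L : finType) (l0 : L) :
  set (set (nat -> stateT R n l0)) :=
  [set X | exists (k : nat) (B : set (stateT R n l0)),
     measurable B /\ X = [set w | B (w k)]].

Definition runT (R : realType) n (L : finType) (l0 : L) :=
  g_sigma_algebraType (@coord_cylinders R n L l0).

Record SHS (R : realType) (n : nat) (L A : finType) := {
  shs_edges : {set L * A * L};
  shs_inv   : L -> set (n.-tuple R);
  shs_flow  : L -> n.-tuple R -> R -> n.-tuple R;
  shs_guard : L * A * L -> set (n.-tuple R);
  shs_reset : L * A * L -> n.-tuple R -> set (n.-tuple R);
  shs_delay : L -> n.-tuple R -> probability R R;
  shs_w     : L -> n.-tuple R -> L * A * L -> R;
  shs_eta   : L * A * L -> n.-tuple R -> probability (n.-tuple R) R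
}.

Section SHS_defs.
Context (R : realType) (n : nat) (L A : finType) (H : SHS R n L A).

Definition src (e : L * A * L) : L := e.1.1.
Definition dst (e : L * A * L) : L := e.2.

Definition enabled (l : L) (v : n.-tuple R) (e : L * A * L) : bool :=
  (e \in shs_edges H) && (src e == l) && `[< shs_guard H e v >].

Definition SHS_wf : Prop :=
  (forall l v, shs_delay H l v [set t : R | 0 <= t] = 1%E) /\
  (forall l v e, 0 <= shs_w H l v e) /\
  (forall l v e, shs_w H l v e != 0 -> enabled l v e) /\
  (forall l v, \sum_(e | enabled l v e) shs_w H l v e = 1).

Definition strongly_reset (e : L * A * L) : Prop :=
  forall v v' (D : set (n.-tuple R)), shs_eta H e v D = shs_eta H e v' D.

Definition loc_arc : rel L := fun l l' => [exists a : A, (l, a, l') \in shs_edges H].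

Definition SR_arc (l l' : L) : Prop :=
  loc_arc l l' /\ forall a : A, (l, a, l') \in shs_edges H -> strongly_reset (l, a, l').

Definition cycle_reset : Prop :=
  forall c : seq L, c != [::] -> uniq c -> cycle loc_arc c ->
    exists2 x, x \in c & SR_arc x (next c x).

Context (l0 : L).
Local Notation S := (stateT R n l0).

(* the kernel kappa of T_H, extended to all measurable B by additivity over
   the target location:  kappa(s, B) = sum_l' kappa(s, {l'} x B_l')       *)
Definition shs_kernel (s : S) (B : set S) : \bar R :=
  let l := s.1 in let v := s.2 in
  (\int[shs_delay H l v]_(t in [set: R])
     (\sum_(e | (e \in shs_edges H) && (src e == l))
        ((shs_w H l (shs_flow H l v t) e)%:E *
         shs_eta H e (shs_flow H l v t) [set v' | B (dst e, v')])))%E.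

(* iterated integral giving the probability of the cylinder
   s_j in A j, ..., s_{j+m} in A (j+m), starting from s *)
Fixpoint cyl_int (kap : S -> set S -> \bar R) (As : nat -> set S)
    (m j : nat) (s : S) : \bar R :=
  match m with
  | 0 => (\1_(As j) s)%:E
  | m'.+1 => ((\1_(As j) s)%:E * \int[kap s]_(t in [set: S]) cyl_int kap As m' j.+1 t)%E
  end.

(* P is the probability measure P^{T_H}_nu on runs induced by the kernel and
   the initial distribution nu (Ionescu-Tulcea): it is characterised by its
   values on the finite-dimensional cylinders. *)
Definition is_run_measure (nu : probability S R)
    (P : probability (runT R n l0) R) : Prop :=
  forall (k : nat) (As : nat -> set S), (forall i, measurable (As i)) ->
    P [set w : runT R n l0 | forall i, (i <= k)%N -> As i (w i)] =
    (\int[nu]_(s in [set: S]) cyl_int shs_kernel As k 0 s)%E.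

Definition GF_step (l l' : L) : set (runT R n l0) :=
  [set w | forall N : nat, exists2 k : nat, (N <= k)%N &
     (w k).1 = l /\ (w k.+1).1 = l'].

Definition GF_SR : set (runT R n l0) :=
  [set w | exists l l' : L, SR_arc l l' /\ GF_step l l' w].

End SHS_defs.

From HB Require Import structures.
From mathcomp Require Import all_boot all_order all_algebra.
From mathcomp Require Import all_classical all_reals all_analysis.
Set Implicit Arguments. Unset Strict Implicit. Unset Printing Implicit Defensive.
Import Order.TTheory GRing.Theory Num.Theory.
Local Open Scope classical_set_scope.
Local Open Scope ring_scope.

(* The argument has a combinatorial and a probabilistic half.
   - Combinatorics: along an infinite path in a finite graph, some step
     (a, b) is taken infinitely often and, from some time on, every step
     taken is of this kind; since the path then returns to a state it has
     visited, the recurrent steps contain a simple cycle.  If every simple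
     cycle contains an SR arc, some SR arc is traversed infinitely often
     ([recurrent_SR_arc]).
   - Probability: every step of a run follows an edge, i.e. the event
     "location l at time k, then a location not adjacent to l" is a cylinder
     whose iterated kernel integral vanishes ([cyl_int_jump_base]).
     Hence almost every run projects to a path of the location graph
     ([stray_runs_negligible]).
   The theorem follows: the complement of GF_SR consists of stray runs, so it
   is negligible, and GF_SR (a measurable event) has probability 1.  Only the
   support of the kernel matters. *)

Section recurrent_steps.
Variables (L : finType) (x : nat -> L).

Definition infinitely_often (a b : L) : Prop :=
  forall N, exists2 k, (N <= k)%N & x k = a /\ x k.+1 = b.

(* each of the finitely many steps that is taken only finitely often has a
   last occurrence; beyond all of them only recurrent steps are taken *)
Lemma eventually_recurrent_steps :
  exists N, forall k, (N <= k)%N -> infinitely_often (x k) (x k.+1).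
Proof.
have last_time (p : L * L) : exists N : nat, ~ infinitely_often p.1 p.2 ->
    forall k, (N <= k)%N -> ~ (x k = p.1 /\ x k.+1 = p.2).
  have [io|/existsNP [N hN]] := pselect (infinitely_often p.1 p.2).
    by exists 0%N.
  by exists N => _ k Nk hk; apply: hN; exists k.
have [f hf] := choice last_time.
exists (\max_(p : L * L) f p)%N => k hk; apply: contrapT => nio.
apply: (hf (x k, x k.+1) nio k) => //.
exact: leq_trans (leq_bigmax _) hk.
Qed.

Lemma revisit_after (N : nat) :
  exists k1 k2, [/\ (N <= k1)%N, (k1 < k2)%N & x k1 = x k2].
Proof.
pose g (i : 'I_#|L|.+1) := x (N + i).
have [/injectiveP ginj|] := boolP (injectiveb g).
  by have := leq_card g ginj; rewrite card_ord ltnn.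
move/injectivePn => [i [j ij gij]].
have [hij|hij|hij] := ltngtP i j; last by rewrite (val_inj hij) eqxx in ij.
- by exists (N + i)%N, (N + j)%N; rewrite leq_addr ltn_add2l.
- by exists (N + j)%N, (N + i)%N; rewrite leq_addr ltn_add2l.
Qed.

End recurrent_steps.

Lemma simple_cycle_of_loop (L : finType) (e : rel L) (a b : L) :
  e a b -> connect e b a -> exists c : seq L, [/\ c != [::], uniq c & cycle e c].
Proof.
move=> eab /connectP [p pp lp]; move: lp; case: (shortenP pp) => p' pp' up' _ lp.
by exists (b :: p'); split => //; rewrite /cycle rcons_path pp' /= -lp.
Qed.

Lemma recurrent_SR_arc (L : finType) (e : rel L) (SR : L -> L -> Prop)
    (x : nat -> L) :
  (forall k, e (x k) (x k.+1)) ->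
  (forall c : seq L, c != [::] -> uniq c -> cycle e c ->
     exists2 y, y \in c & SR y (next c y)) ->
  exists a b, SR a b /\ infinitely_often x a b.
Proof.
move=> path_x cyc.
have [N recN] := eventually_recurrent_steps x.
pose e' a b := e a b && `[< infinitely_often x a b >].
have step k : (N <= k)%N -> e' (x k) (x k.+1).
  by move=> hk; rewrite /e' path_x; apply/asboolP; exact: recN.
have conn m k : (N <= k)%N -> connect e' (x k) (x (k + m)%N).
  elim: m => [|m IH] hk; first by rewrite addn0 connect0.
  rewrite addnS; apply: connect_trans (IH hk) (connect1 _).
  by apply: step; exact: leq_trans hk (leq_addr _ _).
have [k1 [k2 [Nk1 k12 xk]]] := revisit_after x N.
have back : connect e' (x k1.+1) (x k1).
  rewrite xk -(subnKC k12); exact/conn/leqW.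
have [c [c0 uc cc]] := simple_cycle_of_loop (step k1 Nk1) back.
have ce : cycle e c by apply: sub_cycle cc => a b /andP[].
have [y yc sry] := cyc c c0 uc ce.
have /andP[_ /asboolP iy] := next_cycle cc yc.
by exists y, (next c y).
Qed.

Section integral_null_support.
Context d (T : measurableType d) (R : realType).
Variables (mu : set T -> \bar R) (B : set T).
(* [mu] is an arbitrary set function (the kernel of an SHS is only given as
   one) which is null on every subset of [B] *)
Hypothesis mu_null : forall B', B' `<=` B -> mu B' = 0%E.
Import HBNNSimple.
Local Open Scope ereal_scope.

(* every simple minorant of a nonnegative [g] that vanishes off [B] is
   supported in [B], so the supremum of their integrals is 0 *)
Lemma sup_simple_minorants_null (g : T -> \bar R) :
  (forall x, ~ B x -> g x <= 0) -> (forall x, 0 <= g x) ->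
  ereal_sup [set sintegral mu h |
    h in [set h : {nnsfun T >-> R} | forall x, (h x)%:E <= g x]] = 0.
Proof.
move=> gB g0.
have si (h : {nnsfun T >-> R}) : (forall x, (h x)%:E <= g x) ->
    sintegral mu h = 0.
  move=> hg; rewrite /sintegral fsbig1 // => r _.
  have [->|r0] := eqVneq r 0%R; first by rewrite mul0e.
  rewrite mu_null ?mule0 // => y /= hy; apply: contrapT => nBy.
  have := le_trans (hg y) (gB _ nBy); rewrite hy lee_fin => r_le0.
  have : (0 <= h y)%R by exact: fun_ge0.
  by rewrite hy => r_ge0; move: r0; rewrite eq_le r_le0 r_ge0.
apply/eqP; rewrite eq_le; apply/andP; split.
  by apply: ge_ereal_sup => _ [h hg <-]; rewrite si.
by apply: ereal_sup_ubound; exists nnsfun0 => //; rewrite si.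
Qed.

Lemma integral_null_support (f : T -> \bar R) :
  (forall x, ~ B x -> f x = 0) -> \int[mu]_(x in setT) f x = 0.
Proof.
move=> fB; rewrite /integral /= patch_setT.
rewrite sup_simple_minorants_null //; last first.
  by move=> x nBx; rewrite funeposE /= fB // maxxx.
rewrite sup_simple_minorants_null ?sube0 // => x nBx.
by rewrite funenegE /= fB // oppe0 maxxx.
Qed.

End integral_null_support.

Lemma measurable_const_set d (T : measurableType d) (P : Prop) :
  measurable [set _ : T | P].
Proof.
have [p|np] := pselect P.
  by rewrite (_ : [set _ | P] = setT) //; apply/seteqP; split.
by rewrite (_ : [set _ | P] = set0) //; apply/seteqP; split.
Qed.

Lemma probability_conull d (T : measurableType d) (R : realType)
    (P : probability T R) (E : set T) :
  measurable E -> P.-negligible (~` E) -> P E = 1%E.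
Proof.
move=> mE /(measure_negligible (measurableC mE)) PC0.
have := probability_setC P mE; rewrite PC0 => /esym/eqP.
by rewrite sube_eq ?fin_num_measure // add0e => /eqP <-.
Qed.

Section shs_runs.
Context (R : realType) (n : nat) (L A : finType) (H : SHS R n L A) (l0 : L).
Local Notation S := (stateT R n l0).
Local Notation RT := (runT R n l0).

Lemma shs_kernel_unreachable (s : S) (B : set S) :
  (forall e, e \in shs_edges H -> src e = s.1 -> [set v' | B (dst e, v')] = set0) ->
  shs_kernel H s B = 0%E.
Proof.
move=> hB; apply: integral0_eq => t _.
rewrite big1 // => e /andP[Ee /eqP se].
by rewrite hB // measure0 mule0.
Qed.

Lemma measurable_location (P : L -> Prop) : measurable [set s : S | P s.1].
Proof. by move=> l; exact: (measurable_const_set _ (P l)). Qed.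

Lemma measurable_coord (k : nat) (B : set S) : measurable B ->
  measurable [set w : RT | B (w k)].
Proof. by move=> mB; apply: sub_sigma_algebra; exists k, B. Qed.

Definition jump_base (k : nat) (l : L) (i : nat) : set S :=
  if i == k then [set s : S | s.1 = l]
  else if i == k.+1 then [set s : S | ~~ loc_arc H l s.1] else setT.

Lemma measurable_jump_base k l i : measurable (jump_base k l i).
Proof.
rewrite /jump_base; case: ifP => _; first exact: (measurable_location (eq^~ l)).
case: ifP => _; last exact: measurableT.
exact: (measurable_location (fun l' => ~~ loc_arc H l l')).
Qed.

(* the iterated kernel integral of the cylinder of a forbidden jump vanishes:
   at time k the kernel gives no mass to the next base; before time k the
   vanishing propagates through the outer integrals *)
Lemma cyl_int_jump_base k l m j (s : S) : (j + m = k)%N ->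
  cyl_int (@shs_kernel _ _ _ _ H l0) (jump_base k l) m.+1 j s = 0%E.
Proof.
elim: m j s => [|m IH] j s /= hj.
  rewrite addn0 in hj; subst j.
  have [sl|sl] := eqVneq s.1 l; last first.
    by rewrite indicE /jump_base eqxx memNset /= ?mul0e //; apply/eqP.
  rewrite (@integral_null_support _ _ _ _ (jump_base k l k.+1)) ?mule0 //.
    move=> B' B'B; apply: shs_kernel_unreachable => -[[a b] c] Ee se.
    apply/seteqP; split => // v' /B'B; rewrite /jump_base gtn_eqF //= eqxx.
    rewrite /loc_arc -sl -se /=.
    by move/negP; apply; apply/existsP; exists b.
  by move=> t nt; rewrite indicE memNset.
rewrite (@integral_null_support _ _ _ _ set0) ?mule0 //.
  move=> B' B'0; apply: shs_kernel_unreachable => e _ _.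
  by apply/seteqP; split => // v' /B'0.
by move=> t _; apply: IH; rewrite addSnnS.
Qed.

Definition forbidden_jump (k : nat) (l : L) : set RT :=
  [set w | forall i, (i <= k.+1)%N -> jump_base k l i (w i)].

Lemma measurable_forbidden_jump k l : measurable (forbidden_jump k l).
Proof.
have -> : forbidden_jump k l = \bigcap_i [set w : RT |
    (if (i <= k.+1)%N then jump_base k l i else setT) (w i)].
  apply/seteqP; split => w /= hw.
    by move=> i _ /=; case: ifP => // hi; exact: hw.
  by move=> i hi; have := hw i I; rewrite /= hi.
apply: bigcapT_measurable => i; apply: measurable_coord.
by case: ifP => _; [exact: measurable_jump_base | exact: measurableT].
Qed.

Lemma forbidden_jump_null (nu : probability S R) (P : probability RT R) k l :
  is_run_measure H nu P -> P (forbidden_jump k l) = 0%E.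
Proof.
move=> hrun; rewrite /forbidden_jump hrun; last exact: measurable_jump_base.
by apply: integral0_eq => s _; exact: cyl_int_jump_base.
Qed.

Definition stray_runs : set RT :=
  [set w | exists k, ~~ loc_arc H (w k).1 (w k.+1).1].

(* a stray run makes a forbidden jump at some time from some location; these
   countably many null events cover the stray runs *)
Lemma stray_runs_negligible (nu : probability S R) (P : probability RT R) :
  is_run_measure H nu P -> P.-negligible stray_runs.
Proof.
move=> hrun.
apply: (@negligibleS _ _ _ _
    (\bigcup_k \big[setU/set0]_(l <- enum L) forbidden_jump k l)).
  move=> w [k /= hk]; exists k => //.
  rewrite (big_rem (w k).1) ?mem_enum //=; left.
  move=> i _; rewrite /jump_base.
  by case: ifP => [/eqP -> //|_]; case: ifP => [/eqP -> |].
apply: negligible_bigcup => k; elim/big_ind: _.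
- exact: negligible_set0.
- exact: negligibleU.
- move=> l _; exists (forbidden_jump k l); split => //.
    exact: measurable_forbidden_jump.
  exact: forbidden_jump_null hrun.
Qed.

Lemma measurable_GF_step (l l' : L) : measurable (@GF_step R n L l0 l l').
Proof.
have -> : @GF_step R n L l0 l l' = \bigcap_N \bigcup_(k in [set k | (N <= k)%N])
    ([set w : RT | (w k).1 = l] `&` [set w : RT | (w k.+1).1 = l']).
  apply/seteqP; split => w /= hw.
    by move=> N _; have [k Nk [h1 h2]] := hw N; exists k.
  by move=> N; have [k /= Nk [h1 h2]] := hw N I; exists k.
apply: bigcapT_measurable => N; apply: bigcup_measurable => k _.
apply: measurableI; first exact: (measurable_coord k (measurable_location (eq^~ l))).
exact: (measurable_coord k.+1 (measurable_location (eq^~ l'))).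
Qed.

Lemma measurable_GF_SR : measurable (@GF_SR R n L A H l0).
Proof.
have -> : @GF_SR R n L A H l0 = \bigcup_(p : L * L)
    ([set _ : RT | SR_arc H p.1 p.2] `&` @GF_step R n L l0 p.1 p.2).
  apply/seteqP; split => w /=; first by move=> [a [b ?]]; exists (a, b).
  by move=> [[a b] _ /= ?]; exists a, b.
apply: countable_bigcupT_measurable; first exact: countableP.
by move=> p; apply: measurableI; [exact: measurable_const_set | exact: measurable_GF_step].
Qed.

Lemma not_GF_SR_stray : cycle_reset H -> ~` @GF_SR R n L A H l0 `<=` stray_runs.
Proof.
move=> cr w nGF; apply: contrapT => follows; apply: nGF.
have arcs k : loc_arc H (w k).1 (w k.+1).1.
  by apply: contrapT => /negP nk; apply: follows; exists k.
by have [a [b [sr io]]] := recurrent_SR_arc arcs cr; exists a, b.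
Qed.

End shs_runs.

Theorem mainTheorem10 (R : realType) (n : nat) (L A : finType) (l0 : L)
  (H : SHS R n L A) :
  SHS_wf H -> cycle_reset H ->
  forall (nu : probability (stateT R n l0) R)
         (P : probability (runT R n l0) R),
    is_run_measure H nu P ->
    P (@GF_SR R n L A H l0) = 1%E.
Proof.
move=> _ cr nu P hrun.
apply: probability_conull; first exact: measurable_GF_SR.
exact: negligibleS (not_GF_SR_stray cr) (stray_runs_negligible hrun).
Qed.
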